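(* Let $N$ be an odd prime, $V=\mathbb{Z}_N\times\mathbb{Z}_N$, and let $H$ be the channel operator $H(S)[n]=\sum_{k=1}^r\alpha_k\,e(\omega_k n)\,S[n-\tau_k]$ with $\alpha_k\in\mathbb{C}$, $\sum_k|\alpha_k|^2\le 1$, $(\tau_k,\omega_k)\in V$, and $\mathrm{supp}(H)=\{(\tau_k,\omega_k):k=1,\dots,r\}$. Let $L\neq M$ be two lines in $V$ such that $H$ is generic with respect to both $L$ and $M$. Let $C_L\in\mathcal{B}_L$, $C_M\in\mathcal{B}_M$ be chirps with associated characters $\psi_L:L\to\mathbb{C}^*$, $\psi_M:M\to\mathbb{C}^*$, i.e. $\pi(l)C_L=\psi_L(l)C_L$ for all $l\in L$ and $\pi(m)C_M=\psi_M(m)C_M$ for all $m\in M$. Define $h:L\times M\to\mathbb{C}$ by $$h(l,m)=\mathcal{A}(C_L,H(C_L))[m]\cdot\psi_L(l)-\mathcal{A}(C_M,H(C_M))[l]\cdot e(\Omega[l,m])\cdot\psi_M(m),$$ where $\Omega[(\tau,\omega),(\tau',\omega')]=\tau\omega'-\omega\tau'\in\mathbb{Z}_N$. If $l\in L$, $m\in M$ and $l+m\in\mathrm{supp}(H)$, then $h(l,m)=0$.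
   Context: $\mathcal{H}$ is the space of functions $\mathbb{Z}_N\to\mathbb{C}$ with inner product $\langle f,g\rangle=\sum_{n}f[n]\overline{g[n]}$; $e(t)=\exp(2\pi i t/N)$; $2^{-1}=(N+1)/2$. Heisenberg operators: $[\pi(\tau,\omega)f][n]=e(-2^{-1}\tau\omega)e(\omega n)f[n-\tau]$; ambiguity function: $\mathcal{A}(f,g)[\tau,\omega]=\langle\pi(\tau,\omega)f,g\rangle$. Lines in $V$: $L_a=\{(\tau,a\tau)\}$ ($a\in\mathbb{Z}_N$) and $L_\infty=\{(0,\omega)\}$. Chirp bases: $\mathcal{B}_{L_a}=\{C_{L_a,b}:b\in\mathbb{Z}_N\}$ with $C_{L_a,b}[n]=e(2^{-1}an^2-bn)/\sqrt{N}$, satisfying $\pi(\tau,a\tau)C_{L_a,b}=e(b\tau)C_{L_a,b}$; and $\mathcal{B}_{L_\infty}=\{\delta_b:b\in\mathbb{Z}_N\}$, satisfying $\pi(0,\omega)\delta_b=e(b\omega)\delta_b$. $H$ is generic with respect to a line $L$ if $u-v\notin L$ for all distinct $u,v\in\mathrm{supp}(H)$. *)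

From HB Require Import structures.
From mathcomp Require Import all_boot all_order all_algebra.
From mathcomp Require Import reals trigo.
From mathcomp Require Import complex.
Set Implicit Arguments. Unset Strict Implicit. Unset Printing Implicit Defensive.
Import Order.TTheory GRing.Theory Num.Theory.
Local Open Scope ring_scope.
Local Open Scope complex_scope.

Section Heisenberg.
Variables (R : realType) (N : nat).

Definition V := ('Z_N * 'Z_N)%type.
Definition vadd (u v : V) : V := (u.1 + v.1, u.2 + v.2).
Definition vsub (u v : V) : V := (u.1 - v.1, u.2 - v.2).

(* e(t) = exp(2 pi i t / N), t read as its representative in [0, N) *)
Definition eN (t : 'Z_N) : R[i] :=
  (cos (2 * pi * (nat_of_ord t)%:R / N%:R)) +i* (sin (2 * pi * (nat_of_ord t)%:R / N%:R)).

(* 2^{-1} = (N+1)/2 in Z_N *)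
Definition half : 'Z_N := ((N.+1)./2)%:R.

Definition hpi (u : V) (f : 'Z_N -> R[i]) : 'Z_N -> R[i] :=
  fun n => eN (- (half * u.1 * u.2)) * eN (u.2 * n) * f (n - u.1).

Definition inner (f g : 'Z_N -> R[i]) : R[i] := \sum_(n : 'Z_N) f n * (g n)^*.

Definition ambiguity (f g : 'Z_N -> R[i]) (u : V) : R[i] := inner (hpi u f) g.

Definition Omega (u v : V) : 'Z_N := u.1 * v.2 - u.2 * v.1.

(* lines through the origin: L_a = {(t, a t)} and L_oo = {(0, w)} *)
Inductive line := Lslope of 'Z_N | Linf.

Definition on_line (L : line) (u : V) : bool :=
  match L with
  | Lslope a => u.2 == a * u.1
  | Linf => u.1 == 0
  end.

Definition chirp (L : line) (b : 'Z_N) : 'Z_N -> R[i] :=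
  match L with
  | Lslope a => fun n => eN (half * a * n * n - b * n) / (Num.sqrt (N%:R : R))%:C
  | Linf => fun n => if n == b then 1 else 0
  end.

Definition in_chirp_basis (L : line) (C : 'Z_N -> R[i]) : Prop :=
  exists b : 'Z_N, C = chirp L b.

Definition channel (r : nat) (alpha : 'I_r -> R[i]) (pts : 'I_r -> V)
  (S : 'Z_N -> R[i]) : 'Z_N -> R[i] :=
  fun n => \sum_(k < r) alpha k * eN ((pts k).2 * n) * S (n - (pts k).1).

Definition in_supp (r : nat) (pts : 'I_r -> V) (u : V) : Prop :=
  exists k : 'I_r, pts k = u.

Definition generic (r : nat) (pts : 'I_r -> V) (L : line) : Prop :=
  forall u v : V, in_supp pts u -> in_supp pts v -> u <> v -> ~~ on_line L (vsub u v).

Definition hfun (r : nat) (alpha : 'I_r -> R[i]) (pts : 'I_r -> V)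
  (CL CM : 'Z_N -> R[i]) (psiL psiM : V -> R[i]) (l m : V) : R[i] :=
  ambiguity CL (channel alpha pts CL) m * psiL l
  - ambiguity CM (channel alpha pts CM) l * eN (Omega l m) * psiM m.

End Heisenberg.

(* A chirp C in B_L is a unit vector with pi(l) C = psi(l) C for l in L, and the
   commutation rule pi(l) pi(u) = e(-Omega[l,u]) pi(u) pi(l) shows that
   <pi(u) C, C> = 0 as soon as u is off L.  Writing H = sum_k beta_k pi(v_k), the
   ambiguity <pi(b) C, H C> with b + a = v in supp(H), a in L, therefore only sees
   the v_k with v_k - b in L, i.e. (by genericity) v_k = v, and evaluates to
   conj(beta_v) e(-2^{-1} Omega[b,a]) / psi(a).  Applying this to (L, m, l) and to
   (M, l, m), the two terms of h(l,m) agree because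
   -2^{-1} Omega[m,l] = -2^{-1} Omega[l,m] + Omega[l,m]. *)
From Pilot Require Import Defs.
From HB Require Import structures.
From mathcomp Require Import all_boot all_order all_algebra.
From mathcomp Require Import reals trigo.
From mathcomp Require Import complex.
From mathcomp Require Import ring.
Set Implicit Arguments. Unset Strict Implicit. Unset Printing Implicit Defensive.
Import Order.TTheory GRing.Theory Num.Theory.
Local Open Scope ring_scope.

Section UnitCircle.
Variable R : realType.

Definition cis (x : R) : R[i] := (cos x +i* sin x)%C.

Lemma cisD x y : cis (x + y) = cis x * cis y.
Proof.
rewrite /cis cosD sinD; apply/eqP; rewrite eq_complex /=.
by rewrite eqxx [_ * _ + _]addrC eqxx.
Qed.

Lemma conj_cis x : (cis x)^* = cis (- x).
Proof. by rewrite /cis cosN sinN. Qed.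

Lemma cis0 : cis 0 = 1.
Proof. by rewrite /cis cos0 sin0. Qed.

Lemma cis_2pi_nat (q : nat) : cis (2 * pi * q%:R) = 1.
Proof.
have -> : 2 * pi * q%:R = 0 + (pi *+ 2) *+ q :> R.
  by rewrite add0r -mulrnA -[pi *+ _]mulr_natr natrM; ring.
by rewrite /cis (periodicn (@cosD2pi R)) (periodicn (@sinD2pi R)) cos0 sin0.
Qed.

Lemma cis_2pi_modn (x p : nat) : (0 < p)%N ->
  cis (2 * pi * (x %% p)%:R / p%:R) = cis (2 * pi * x%:R / p%:R).
Proof.
move=> p_gt0; rewrite {2}(divn_eq x p) natrD natrM.
have p_neq0 : (p%:R : R) != 0 by rewrite pnatr_eq0 -lt0n.
have -> : 2 * pi * ((x %/ p)%:R * p%:R + (x %% p)%:R) / p%:R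
   = 2 * pi * (x %% p)%:R / p%:R + 2 * pi * (x %/ p)%:R :> R by field.
by rewrite cisD cis_2pi_nat mulr1.
Qed.

Lemma cis_pi_neq1 (t : R) : 0 < t < 2 -> cis (pi * t) != 1.
Proof.
move=> /andP[t_gt0 t_lt2]; rewrite eq_complex /= negb_and.
have pi_gt0 : 0 < pi :> R := pi_gt0 R.
case: (ltgtP t 1) => [t_lt1|t_gt1|->]; apply/orP; [right|right|left].
- rewrite gt_eqF // sin_gt0_pi // mulr_gt0 //=.
  by rewrite -[X in _ < X]mulr1 ltr_pM2l.
- have -> : sin (pi * t) = - sin (pi * t - pi).
    by rewrite -[pi * t in LHS](subrK pi) sinDpi.
  rewrite oppr_eq0 gt_eqF // sin_gt0_pi // subr_gt0 -[X in X < _]mulr1.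
  rewrite ltr_pM2l // t_gt1 /= ltrBlDr -mulr2n -[pi *+ 2]mulr_natr.
  by rewrite ltr_pM2l.
- rewrite mulr1 -[pi]add0r cosDpi cos0 eq_sym -subr_eq0 opprK.
  by rewrite (paddr_eq0 ler01 ler01) oner_eq0.
Qed.

End UnitCircle.

Section Characters.
Variables (R : realType) (N : nat).
Hypothesis N_gt1 : (1 < N)%N.
Local Notation e := (@eN R N).

Lemma eNE (t : 'Z_N) : e t = cis (2 * pi * (nat_of_ord t)%:R / N%:R).
Proof. by []. Qed.

Lemma eND (a b : 'Z_N) : e (a + b) = e a * e b.
Proof.
rewrite !eNE.
have -> : nat_of_ord (a + b) = ((nat_of_ord a + nat_of_ord b) %% N)%N.
  by rewrite [X in (_ %% X)%N](esym (Zp_cast N_gt1)).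
rewrite cis_2pi_modn ?(ltn_trans _ N_gt1) // -cisD natrD.
by congr cis; ring.
Qed.

Lemma eN0 : e 0 = 1.
Proof. by rewrite eNE /= mulr0 mul0r cis0. Qed.

Lemma conj_eN (a : 'Z_N) : (e a)^* = e (- a).
Proof.
have -> : (e a)^* = (e a)^* * (e a * e (- a)) by rewrite -eND subrr eN0 mulr1.
by rewrite mulrA !eNE conj_cis -cisD addNr cis0 mul1r.
Qed.

Lemma eN_mul_conj (a : 'Z_N) : e a * (e a)^* = 1.
Proof. by rewrite conj_eN -eND subrr eN0. Qed.

Lemma eN_eq1 (c : 'Z_N) : e c = 1 -> c = 0.
Proof.
move=> ec1; apply: val_inj; apply/eqP; rewrite /= -leqn0 leqNgt.
apply: contraPN ec1 => c_gt0; apply/eqP; rewrite eNE.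
have c_ltN : (nat_of_ord c < N)%N by rewrite -[X in (_ < X)%N](Zp_cast N_gt1).
have N_gt0 : (0 : R) < N%:R by rewrite ltr0n (ltn_trans _ N_gt1).
have -> : 2 * pi * (nat_of_ord c)%:R / N%:R = pi * (2 * (nat_of_ord c)%:R / N%:R) :> R.
  by ring.
rewrite cis_pi_neq1 // divr_gt0 // ?mulr_gt0 ?ltr0n //=.
by rewrite ltr_pdivrMr // ltr_pM2l // ltr_nat.
Qed.

Hypothesis N_odd : odd N.
Local Notation h := (@Defs.half N).

Lemma half_add_half : h + h = 1.
Proof.
rewrite /Defs.half -natrD addnn halfK /= N_odd /= subn0 -[N.+1]addn1 natrD pchar_Zp //.
by rewrite add0r.
Qed.

Lemma half_Omega_swap (u v : V N) : - (h * Omega v u) = - (h * Omega u v) + Omega u v.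
Proof.
apply/eqP; rewrite -subr_eq0.
have -> : - (h * Omega v u) - (- (h * Omega u v) + Omega u v)
  = (h + h - 1) * Omega u v by rewrite /Omega; ring.
by rewrite half_add_half subrr mul0r.
Qed.

End Characters.

Section Heisenberg.
Variables (R : realType) (N : nat).
Hypotheses (N_gt1 : (1 < N)%N) (N_odd : odd N).
Local Notation e := (@eN R N).
Local Notation h := (@Defs.half N).
Implicit Types (u v a b : V N) (f g : 'Z_N -> R[i]).

Definition vneg u : V N := (- u.1, - u.2).

Lemma vaddC u v : vadd u v = vadd v u.
Proof. by rewrite /vadd addrC [_.2 + _]addrC. Qed.

Lemma hpiE u f n : hpi u f n = e (u.2 * n - h * u.1 * u.2) * f (n - u.1).
Proof. by rewrite /hpi [_ - _ * _.1 * _]addrC eND. Qed.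

Lemma hpiM u v f n : hpi u (hpi v f) n = e (- (h * Omega u v)) * hpi (vadd u v) f n.
Proof.
rewrite !hpiE !mulrA -!eND //; congr (e _ * f _); last by rewrite /vadd /=; ring.
apply/eqP; rewrite -subr_eq0.
have -> : u.2 * n - h * u.1 * u.2 + (v.2 * (n - u.1) - h * v.1 * v.2)
   - (- (h * Omega u v) + ((vadd u v).2 * n - h * (vadd u v).1 * (vadd u v).2))
   = (h + h - 1) * (u.1 * v.2) by rewrite /Omega /vadd /=; ring.
by rewrite half_add_half // subrr mul0r.
Qed.

Lemma hpi0 f n : hpi (0, 0) f n = f n.
Proof. by rewrite hpiE /= !mulr0 subr0 mul0r eN0 // mul1r subr0. Qed.

Lemma hpiZ u c f n : hpi u (fun m => c * f m) n = c * hpi u f n.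
Proof. by rewrite !hpiE mulrCA. Qed.

Lemma eq_inner f f' g g' : f =1 f' -> g =1 g' -> inner f g = inner f' g'.
Proof. by move=> ff' gg'; apply: eq_bigr => n _; rewrite ff' gg'. Qed.

Lemma innerZl c f g : inner (fun n => c * f n) g = c * inner f g.
Proof. by rewrite /inner mulr_sumr; apply: eq_bigr => n _; rewrite mulrA. Qed.

Lemma innerZr c f g : inner f (fun n => c * g n) = c^* * inner f g.
Proof. by rewrite /inner mulr_sumr; apply: eq_bigr => n _; rewrite rmorphM /=; ring. Qed.

Lemma inner_sumr r f (G : 'I_r -> 'Z_N -> R[i]) :
  inner f (fun n => \sum_(k < r) G k n) = \sum_(k < r) inner f (G k).
Proof.
rewrite /inner exchange_big /=; apply: eq_bigr => n _.
by rewrite rmorph_sum mulr_sumr.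
Qed.

Lemma inner_hpi u f g : inner (hpi u f) (hpi u g) = inner f g.
Proof.
rewrite /inner [RHS](reindex_inj (addIr (- u.1))) /=.
apply: eq_bigr => n _; rewrite !hpiE rmorphM /=.
by rewrite mulrACA eN_mul_conj // mul1r.
Qed.

Lemma inner_hpi_hpi b v f g :
  inner (hpi b f) (hpi v g) = e (- (h * Omega (vneg v) b)) * inner (hpi (vsub b v) f) g.
Proof.
rewrite -(inner_hpi (vneg v)) -innerZl; apply: eq_inner => n.
  rewrite hpiM; congr (_ * hpi _ f n).
  by rewrite /vadd /vsub /vneg /=; congr (_, _); ring.
rewrite hpiM.
have -> : Omega (vneg v) v = 0 by rewrite /Omega /vneg /=; ring.
have -> : vadd (vneg v) v = (0, 0) by rewrite /vadd /vneg /= !addNr.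
by rewrite mulr0 oppr0 eN0 // mul1r hpi0.
Qed.

Lemma on_lineD (L : line N) u v : on_line L u -> on_line L v -> on_line L (vadd u v).
Proof. by case: L => [a|] /= /eqP-> /eqP->; rewrite ?mulrDr ?addr0. Qed.

Lemma on_lineN (L : line N) u : on_line L u -> on_line L (vneg u).
Proof. by case: L => [a|] /= /eqP->; rewrite ?mulrN ?oppr0. Qed.

Lemma off_line_Omega (L : line N) u :
  ~~ on_line L u -> exists2 l, on_line L l & Omega u l != 0.
Proof.
case: L => [a|] /= u_off.
  by exists (1, a); rewrite /Omega /= ?mulr1 // subr_eq0 mulrC eq_sym.
by exists (0, 1); rewrite // /Omega /= mulr1 mulr0 subr0.
Qed.

Definition channel_coef r (alpha : 'I_r -> R[i]) (pts : 'I_r -> V N) (k : 'I_r) :=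
  alpha k * e (h * (pts k).1 * (pts k).2).

Lemma channelE r alpha (pts : 'I_r -> V N) S n :
  channel alpha pts S n = \sum_(k < r) channel_coef alpha pts k * hpi (pts k) S n.
Proof.
apply: eq_bigr => k _; rewrite hpiE /channel_coef -!mulrA; congr (_ * _).
by rewrite mulrA -!eND // addrCA subrr addr0.
Qed.

Definition channel_weight r alpha (pts : 'I_r -> V N) v :=
  \sum_(k < r | pts k == v) (channel_coef alpha pts k)^*.

Section Eigenvector.
Variables (L : line N) (C : 'Z_N -> R[i]) (psi : V N -> R[i]).
Hypothesis C_eigen : forall l, on_line L l -> hpi l C = (fun n => psi l * C n).
Hypothesis C_unit : inner C C = 1.

Lemma eigenvalue_mul_conj l : on_line L l -> psi l * (psi l)^* = 1.
Proof.
by move=> Ll; rewrite -[RHS]C_unit -(inner_hpi l) C_eigen // innerZl innerZr C_unit mulr1.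
Qed.

Lemma hpi_eigen_shift b a n : on_line L a ->
  hpi (vadd b a) C n = e (h * Omega b a) * (psi a * hpi b C n).
Proof.
by move=> La; rewrite -hpiZ -(C_eigen La) hpiM mulrA -eND // subrr eN0 // mul1r.
Qed.

Lemma ambiguity_off_line u : ~~ on_line L u -> inner (hpi u C) C = 0.
Proof.
move=> u_off; have [l Ll Oul_neq0] := off_line_Omega u_off.
set X := inner (hpi u C) C; set c := e (Omega u l).
have c_neq1 : c != 1 by apply: contra Oul_neq0 => /eqP/(@eN_eq1 R N N_gt1)->.
(* conjugating by pi(l) fixes X, while the commutation rule rescales it by c *)
have XcX : X = c * X.
  rewrite {1}/X -(inner_hpi l) (C_eigen Ll).
  rewrite (@eq_inner _ (fun n => c * (psi l * hpi u C n)) _ (fun n => psi l * C n)) //.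
    by rewrite !innerZl innerZr [psi l * _]mulrA eigenvalue_mul_conj // mul1r.
  move=> n; rewrite hpiM vaddC hpi_eigen_shift // mulrA -eND //.
  by rewrite half_Omega_swap // addrAC addNr add0r.
have : (1 - c) * X = 0 by rewrite mulrBl mul1r -XcX subrr.
by move/eqP; rewrite mulf_eq0 subr_eq0 eq_sym (negbTE c_neq1) => /eqP.
Qed.

Variables (r : nat) (alpha : 'I_r -> R[i]) (pts : 'I_r -> V N).
Hypothesis generic_L : generic pts L.

Lemma inner_hpi_channel b a : on_line L a -> in_supp pts (vadd b a) ->
  inner (hpi b C) (channel alpha pts C)
  = channel_weight alpha pts (vadd b a) * inner (hpi b C) (hpi (vadd b a) C).
Proof.
move=> La supp_v; set v := vadd b a.
rewrite (eq_inner (frefl _) (channelE alpha pts C)).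
rewrite inner_sumr /channel_weight mulr_suml [RHS]big_mkcond; apply: eq_bigr => k _.
rewrite innerZr; case: eqP => [->|vk_neq_v] //.
rewrite inner_hpi_hpi ambiguity_off_line ?mulr0 ?mul0r //.
apply: contra (generic_L (ex_intro _ k erefl) supp_v vk_neq_v) => L_bk.
have -> : vsub (pts k) v = vneg (vadd (vsub b (pts k)) a).
  by rewrite /vsub /vneg /vadd /v /=; congr (_, _); ring.
by rewrite on_lineN // on_lineD.
Qed.

Lemma ambiguity_channel b a : on_line L a -> in_supp pts (vadd b a) ->
  inner (hpi b C) (channel alpha pts C) * psi a
  = channel_weight alpha pts (vadd b a) * e (- (h * Omega b a)).
Proof.
move=> La supp_v; rewrite (inner_hpi_channel La supp_v).
rewrite (eq_inner (frefl _) (fun n => hpi_eigen_shift b n La)).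
rewrite !innerZr inner_hpi C_unit mulr1 conj_eN // -!mulrA.
by rewrite [_^* * _]mulrC eigenvalue_mul_conj // mulr1.
Qed.

End Eigenvector.

Lemma chirp_unit (L : line N) (C : 'Z_N -> R[i]) : in_chirp_basis L C -> inner C C = 1.
Proof.
case=> b ->; case: L => [a|] /=; rewrite /inner; last first.
  rewrite (bigD1 b) //= eqxx rmorph1 mulr1 big1 ?addr0 // => n /negbTE->.
  by rewrite mul0r.
set s := (Num.sqrt (N%:R : R))%:C%C.
have ss : s * s = N%:R.
  by rewrite /s -rmorphM /= -expr2 sqr_sqrtr ?ler0n // rmorph_nat.
have N_neq0 : (N%:R : R[i]) != 0 by rewrite pnatr_eq0 -lt0n (ltn_trans _ N_gt1).
have s_real : s^* = s by exact: conjc_real.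
have sV_real : (s^-1)^* = s^-1 by rewrite conj_Creal // rpredV CrealE s_real.
transitivity (\sum_(n : 'Z_N) (N%:R : R[i])^-1).
  apply: eq_bigr => n _; rewrite rmorphM /= sV_real -ss invfM.
  by rewrite mulrACA eN_mul_conj // mul1r.
by rewrite sumr_const card_ord Zp_cast // -[_^-1 *+ N]mulr_natr mulVf.
Qed.

End Heisenberg.

Theorem mainTheorem4 (R : realType) (N : nat) (hNprime : prime N) (hNodd : odd N)
  (r : nat) (alpha : 'I_r -> R[i]) (pts : 'I_r -> V N)
  (halpha : \sum_(k < r) `|alpha k| ^+ 2 <= 1)
  (L M : line N) (hLM : L <> M)
  (hgenL : generic pts L) (hgenM : generic pts M)
  (CL CM : 'Z_N -> R[i]) (hCL : in_chirp_basis L CL) (hCM : in_chirp_basis M CM)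
  (psiL psiM : V N -> R[i])
  (hpsiL : forall l : V N, on_line L l -> hpi l CL = (fun n => psiL l * CL n))
  (hpsiM : forall m : V N, on_line M m -> hpi m CM = (fun n => psiM m * CM n))
  (l m : V N) (hl : on_line L l) (hm : on_line M m)
  (hlm : in_supp pts (vadd l m)) :
  hfun alpha pts CL CM psiL psiM l m = 0.
Proof.
have N_gt1 := prime_gt1 hNprime.
have hml : in_supp pts (vadd m l) by rewrite vaddC.
have amb_L := ambiguity_channel N_gt1 hNodd hpsiL (chirp_unit N_gt1 hCL) alpha hgenL hl hml.
have amb_M := ambiguity_channel N_gt1 hNodd hpsiM (chirp_unit N_gt1 hCM) alpha hgenM hm hlm.
rewrite /hfun /ambiguity amb_L -mulrA [_ * psiM m]mulrC mulrA amb_M [vadd m l]vaddC.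
by rewrite (half_Omega_swap N_gt1 hNodd l m) eND // mulrA subrr.
Qed.
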